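(* Let $r\geq 2$, $l\in\{0,1,\ldots,r-1\}$ and $n\geq 1$ be integers, and define the polynomial $$h(s)=\sum_{k=0}^{n}(-1)^k\binom{r(n-k)+k+l}{k}s^{n-k}.$$ Then all roots of $h$ are real and lie in the open interval $\left(0,\ r^r/(r-1)^{r-1}\right)$. Moreover $r^r/(r-1)^{r-1}<er$, where $e$ is Euler's number, so all roots lie in $(0,er)$. *)

(* for the polynomial (roots in algC, the algebraic closure of Q,
   which contains all complex roots of an integer polynomial); Stdlib Reals only
   for the final inequality involving Euler's number e = exp 1. *)
From HB Require Import structures.
From mathcomp Require Import all_boot all_order all_algebra all_field.
Set Implicit Arguments. Unset Strict Implicit. Unset Printing Implicit Defensive.
Import Order.TTheory GRing.Theory Num.Theory.
Local Open Scope ring_scope.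

Definition hpoly (r l n : nat) : {poly algC} :=
  \sum_(k < n.+1)
     (((-1) ^+ k * ('C(r * (n - k) + k + l, k)%N)%:R) *: 'X^(n - k)%N).

Definition hbound (r : nat) : algC :=
  (r ^ r)%N%:R / ((r - 1) ^ (r - 1))%N%:R.

(* Enumerate the polynomials h_{l,n} of the statement as P_N := h_{N mod r, N div r}, a monic
   polynomial of degree N div r.  Pascal's rule gives P_{N+r} = c_N P_{N+r-1} - P_N with
   c_N = s if r divides N and c_N = 1 otherwise.  By induction on N, the roots of the r+1
   consecutive polynomials P_N, ..., P_{N+r} are simple, lie in (0, B) with
   B = r^r/(r-1)^(r-1), and interlace: they fill a grid whose rows are increasing and stacked
   one below the other.  At the grid points carrying the roots of P_{N+r} and of P_{N+1} the
   recurrence makes P_{N+r+1} alternate in sign, so it has one root in each gap; the top gap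
   ends at B, where every P_M is positive because t_N = h_{l,n}(B) / ((r-1)^n ((r-1)/r)^l)
   satisfies (r-1)(t_{N+r} - t_{N+r-1}) = t_{N+r-1} - t_N and hence increases.  Finally
   (1 + 1/m)^m < e gives r^r/(r-1)^(r-1) < e r. *)

From HB Require Import structures.
From mathcomp Require Import all_boot all_order all_algebra all_field.
From mathcomp Require Import zify ring.
From mathcomp Require polyrcf.
Set Implicit Arguments. Unset Strict Implicit. Unset Printing Implicit Defensive.
Import Order.TTheory GRing.Theory Num.Theory.
Local Open Scope ring_scope.

Section LexSeq.
Variables (T : Type) (r : nat) (F : nat -> nat -> T).

Definition lexseq (N : nat) : T := F (N %/ r)%N (N %% r)%N.

Lemma lexseqE n l : (l < r)%N -> lexseq (n * r + l) = F n l.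
Proof. by move=> hl; rewrite /lexseq divnMDl ?modnMDl ?divn_small ?modn_small ?addn0 //; lia. Qed.

End LexSeq.

Lemma lexseq_rec (V : pzRingType) r (F : nat -> nat -> V) (alpha beta gamma : V) :
  (0 < r)%N ->
  (forall n l, (l.+1 < r)%N -> F n.+1 l.+1 = alpha * F n.+1 l - beta * F n l.+1) ->
  (forall n, F n.+1 0 = gamma * F n r.-1 - beta * F n 0) ->
  forall N, lexseq r F (N + r)%N =
    (if (r %| N)%N then gamma else alpha) * lexseq r F (N + r.-1)%N - beta * lexseq r F N.
Proof.
move=> r_gt0 recS rec0 N; rewrite (divn_eq N r).
move: (N %/ r)%N (N %% r)%N (ltn_pmod N r_gt0) => q [|l] hl; rewrite /dvdn modnMDl modn_small //=.
  have -> : (q * r + 0 + r = q.+1 * r + 0)%N by lia.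
  have -> : (q * r + 0 + r.-1 = q * r + r.-1)%N by lia.
  by rewrite !lexseqE ?prednK ?rec0.
have -> : (q * r + l.+1 + r = q.+1 * r + l.+1)%N by lia.
have -> : (q * r + l.+1 + r.-1 = q.+1 * r + l)%N by lia.
by rewrite !lexseqE ?recS // ltnW.
Qed.

Lemma increasing_of_increment_rec (R : numFieldType) r (a : R) (t : nat -> R) :
  (1 < r)%N -> 0 < a ->
  (forall N, t (N + r)%N - t (N + r.-1)%N = (t (N + r.-1)%N - t N) / a) ->
  (forall k, (k.+1 < r)%N -> t k < t k.+1) ->
  forall N, t N < t N.+1.
Proof.
move=> hr a_gt0 rec init; elim/ltn_ind => N IH.
case: (ltnP N.+1 r) => hN; first exact: init.
have [M eN] : exists M, N = (M + r.-1)%N by exists (N - r.-1)%N; lia.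
subst N.
have incr : t M < t (M + r.-1)%N.
  pose D := [pred k | (k <= M + r.-1)%N].
  have between : {in D &, forall i j k, (i < k < j)%N -> k \in D}.
    by move=> i j; rewrite !inE => hi hj k /andP[_ kj]; rewrite inE; lia.
  have step : {in D, forall i, i.+1 \in D -> t i < t i.+1}.
    by move=> i _; rewrite inE => hi; apply: IH.
  by apply: (homo_ltn_in lt_trans between step); rewrite ?inE; lia.
rewrite -subr_gt0 -addnS prednK ?rec; last lia.
by rewrite divr_gt0 // subr_gt0.
Qed.

Lemma prod_sub_sign (R : realDomainType) (f : nat -> R) (t : R) m k :
  (k <= m)%N -> (forall b, (b < k)%N -> t < f b) ->
  (forall b, (k <= b < m)%N -> f b < t) ->
  0 < (-1) ^+ k * \prod_(b < m) (t - f b).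
Proof.
move=> km above below.
rewrite -(big_mkord xpredT (fun b => t - f b)) (big_cat_nat (leq0n k) km) /= mulrA.
have -> : (-1) ^+ k = \prod_(0 <= b < k) (-1 : R) by rewrite prodr_const_nat subn0.
rewrite -big_split /= mulr_gt0 // big_seq prodr_gt0 // => b; rewrite mem_index_iota.
  by move=> /andP[_ bk]; rewrite mulN1r opprB subr_gt0 above.
by move=> bm; rewrite subr_gt0 below.
Qed.

Lemma horner_prod_XsubC (R : comNzRingType) (f : nat -> R) m t :
  (\prod_(b < m) ('X - (f b)%:P)).[t] = \prod_(b < m) (t - f b).
Proof. by rewrite horner_prod; apply: eq_bigr => b _; rewrite hornerXsubC. Qed.

Lemma root_prod_XsubC_at (R : comNzRingType) (f : nat -> R) m k : (k < m)%N ->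
  (\prod_(b < m) ('X - (f b)%:P)).[f k] = 0.
Proof.
by move=> km; rewrite horner_prod_XsubC (bigD1 (Ordinal km)) //= subrr mul0r.
Qed.

Lemma monic_roots_in_intervals (R : rcfType) (p : {poly R}) m (lo hi : nat -> R) :
  size p = m.+1 -> p \is monic ->
  (forall j, (j < m)%N -> lo j < hi j) ->
  (forall j k, (j < k < m)%N -> hi k <= lo j) ->
  (forall j, (j < m)%N -> p.[lo j] * p.[hi j] < 0) ->
  exists y : nat -> R, (forall j, (j < m)%N -> lo j < y j < hi j) /\
    p = \prod_(j < m) ('X - (y j)%:P).
Proof.
move=> sp mp lohi hilo sgn.
have ex_root j : exists z, (j < m)%N ==> (lo j < z < hi j) && root p z.
  case: (ltnP j m) => hj; last by exists 0.
  have [z zin rz] := polyrcf.poly_ivtoo (ltW (lohi j hj)) (sgn j hj).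
  by exists z; rewrite rz andbT; move: zin; rewrite in_itv.
pose y j := xchoose (ex_root j).
have yP j : (j < m)%N -> lo j < y j < hi j /\ root p (y j).
  by move=> hj; move: (xchooseP (ex_root j)) => /implyP /(_ hj) /andP[-> ->].
have y_decr j k : (j < k < m)%N -> y k < y j.
  move=> /andP[jk km]; have [/andP[_ yk] _] := yP k km.
  have [/andP[yj _] _] := yP j (ltn_trans jk km).
  by apply: lt_trans yj; apply: lt_le_trans yk _; apply: hilo; rewrite jk km.
set rs := [seq y j | j <- iota 0 m].
have rs_uniq : uniq rs.
  rewrite map_inj_in_uniq ?iota_uniq // => i j; rewrite !mem_iota /= !add0n => im jm eij.
  case: (ltngtP i j) => // [ij|ji].
    by have := y_decr i j; rewrite ij jm eij ltxx => /(_ isT).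
  by have := y_decr j i; rewrite ji im eij ltxx => /(_ isT).
have rs_roots : all (root p) rs.
  by apply/allP => z /mapP [j]; rewrite mem_iota add0n => /= hj ->; case: (yP j hj).
have sp' : size p = (size rs).+1 by rewrite size_map size_iota.
have := all_roots_prod_XsubC sp' rs_roots; rewrite uniq_rootsE (monicP mp) scale1r.
move=> /(_ rs_uniq) ->.
exists y; split; first by move=> j /yP [].
by rewrite big_map -(big_mkord xpredT (fun j => 'X - (y j)%:P)) /index_iota subn0.
Qed.

Section SortedGrid.
Variables (R : realDomainType) (r m : nat) (x : nat -> nat -> R).

Definition grid_sorted := (forall b i, (b < m)%N -> (i < r)%N -> x b i < x b i.+1) /\
  (forall b, (b.+1 < m)%N -> x b.+1 r < x b 0).

Hypothesis x_sorted : grid_sorted.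

Lemma grid_ltr_row b i j : (b < m)%N -> (i < j <= r)%N -> x b i < x b j.
Proof.
move=> bm; elim: j => // j IH /andP[ij jr].
have step : x b j < x b j.+1 by apply: x_sorted.1.
case: (ltngtP i j) => [lt_ij|gt_ij|->] //; last lia.
by apply: lt_trans step; apply: IH; rewrite lt_ij ltnW.
Qed.

Lemma grid_ler_row b i j : (b < m)%N -> (i <= j <= r)%N -> x b i <= x b j.
Proof.
move=> bm /andP[]; rewrite leq_eqVlt => /orP[/eqP-> //|ij jr].
by apply: ltW; apply: grid_ltr_row; rewrite ?ij.
Qed.

Lemma grid_ltr_rows b b' i j : (b' < b < m)%N -> (i <= r)%N -> (j <= r)%N ->
  x b i < x b' j.
Proof.
move=> /andP[]; elim: b i => // b IH i; rewrite ltnS => b'b bm ir jr.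
have lt_b : x b.+1 i < x b 0.
  by apply: le_lt_trans (x_sorted.2 b bm); apply: grid_ler_row; rewrite ?ir ?leqnn.
case: (ltngtP b' b) b'b => // [lt_b'b|->] _.
  by apply: lt_trans lt_b (IH 0%N lt_b'b (ltnW bm) _ jr).
by apply: lt_le_trans lt_b (grid_ler_row (ltnW bm) _); rewrite jr.
Qed.

Lemma grid_bounds b i : (b < m)%N -> (i <= r)%N -> x m.-1 0 <= x b i <= x 0 r.
Proof.
move=> bm ir; apply/andP; split.
  have [->|lt_b] : b = m.-1 \/ (b < m.-1)%N by lia.
    by apply: grid_ler_row; [lia | rewrite ir].
  by apply/ltW/grid_ltr_rows => //; lia.
case: b bm => [|b] bm; first by apply: grid_ler_row; rewrite ?ir ?leqnn.
by apply/ltW/grid_ltr_rows.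
Qed.

End SortedGrid.

Section HPoly.
Variables (R : comNzRingType) (r : nat).

Definition hpoly_over (l n : nat) : {poly R} :=
  \sum_(k < n.+1)
     (((-1) ^+ k * ('C(r * (n - k) + k + l, k)%N)%:R) *: 'X^(n - k)%N).

Lemma coef_hpoly_over l n i : (hpoly_over l n)`_i =
  if (i <= n)%N then (-1) ^+ (n - i) * ('C(r * i + (n - i) + l, n - i))%:R else 0.
Proof.
rewrite /hpoly_over coef_sum.
under eq_bigr do rewrite coefZ coefXn.
case: leqP => hin.
  have hk : (n - i < n.+1)%N by lia.
  rewrite (bigD1 (Ordinal hk)) //= big1 ?addr0.
    by rewrite subKn // eqxx mulr1 [(r * i + _ + _)%N]addnAC.
  move=> k /eqP hk2; case: eqP => [hik|]; last by rewrite mulr0.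
  by exfalso; apply: hk2; apply: val_inj => /=; have := ltn_ord k; lia.
rewrite big1 // => k _; case: eqP => [hik|]; last by rewrite mulr0.
by exfalso; have := ltn_ord k; lia.
Qed.

Lemma size_hpoly_over l n : size (hpoly_over l n) = n.+1.
Proof.
apply/eqP; rewrite eqn_leq; apply/andP; split.
  by apply/leq_sizeP => i hi; rewrite coef_hpoly_over leqNgt hi.
rewrite ltnNge; apply/negP => /leq_sizeP /(_ n (leqnn n))/eqP.
by rewrite coef_hpoly_over leqnn subnn bin0 mulr1 oner_eq0.
Qed.

Lemma hpoly_over_monic l n : hpoly_over l n \is monic.
Proof.
by rewrite monicE lead_coefE size_hpoly_over coef_hpoly_over leqnn subnn bin0 mulr1.
Qed.

Lemma hpoly_over_n0 l : hpoly_over l 0 = 1.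
Proof. by rewrite /hpoly_over big_ord1 /= subn0 expr0 mul1r bin0 scale1r. Qed.

Lemma hpoly_over_recS l n :
  hpoly_over l.+1 n.+1 = hpoly_over l n.+1 - hpoly_over l.+1 n.
Proof.
apply/polyP => i; rewrite coefB !coef_hpoly_over.
case: (ltngtP i n.+1) => hi.
- have hin : (i <= n)%N by lia.
  rewrite hin.
  have e1 : (n.+1 - i = (n - i).+1)%N by lia.
  have e2 : (r * i + (n - i).+1 + l.+1 = (r * i + (n - i).+1 + l).+1)%N by lia.
  have e3 : (r * i + (n - i) + l.+1 = r * i + (n - i).+1 + l)%N by lia.
  rewrite e1 e2 e3 binS natrD exprS; ring.
- have -> : (i <= n)%N = false by lia.
  by rewrite subr0.
- by subst i; rewrite ltnn subnn !bin0 subr0.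
Qed.

Lemma hpoly_over_rec0 n : (0 < r)%N ->
  hpoly_over 0 n.+1 = 'X * hpoly_over r.-1 n - hpoly_over 0 n.
Proof.
move=> r_gt0; apply/polyP => i; rewrite coefB coefXM !coef_hpoly_over.
case: i => [|j] /=.
  by rewrite !subn0 !muln0 !add0n !addn0 !binn exprS; ring.
have [hj|[hj|hj]] : ((j < n) \/ (n < j) \/ j = n)%N by lia.
- have -> : (j < n.+1)%N = true by lia.
  have -> : (j <= n)%N = true by lia.
  rewrite hj.
  have e1 : (n.+1 - j.+1 = (n - j.+1).+1)%N by lia.
  have e2 : (n - j = (n - j.+1).+1)%N by lia.
  have e3 : (r * j.+1 + (n - j.+1).+1 + 0 = (r * j.+1 + (n - j.+1)).+1)%N by lia.
  have e4 : (r * j + (n - j.+1).+1 + r.-1 = r * j.+1 + (n - j.+1))%N.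
    by rewrite mulnS; lia.
  rewrite e1 e2 e3 e4 binS natrD exprS addn0; ring.
- have -> : (j < n.+1)%N = false by lia.
  have -> : (j <= n)%N = false by lia.
  have -> : (j < n)%N = false by lia.
  by rewrite subr0.
- by subst j; rewrite ltnSn leqnn ltnn !subnn !bin0 subr0.
Qed.

End HPoly.

Lemma map_hpoly_over (R S : comNzRingType) (f : {rmorphism R -> S}) r l n :
  map_poly f (hpoly_over R r l n) = hpoly_over S r l n.
Proof.
rewrite /hpoly_over rmorph_sum; apply: eq_bigr => k _.
by rewrite /= map_polyZ map_polyXn rmorphM rmorphXn rmorphN1 rmorph_nat.
Qed.

Definition hbound_over (R : unitRingType) (r : nat) : R :=
  (r ^ r)%N%:R / ((r - 1) ^ (r - 1))%N%:R.

Section PositiveAtBound.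
Variables (R : realFieldType) (r : nat).
Hypothesis r_gt1 : (1 < r)%N.

Local Notation B := (hbound_over R r).
Let a : R := (r - 1)%:R.
Let rho : R := a / r%:R.

Let a_gt0 : 0 < a. Proof. by rewrite ltr0n; lia. Qed.
Let r_neq0 : (r%:R : R) != 0. Proof. by rewrite pnatr_eq0; lia. Qed.
Let rho_gt0 : 0 < rho. Proof. by rewrite divr_gt0 // ltr0n; lia. Qed.

Lemma hbound_scale : B * rho ^+ (r - 1) = r%:R.
Proof.
rewrite /hbound_over /rho /a !natrX expr_div_n.
have -> : (r%:R : R) ^+ r = r%:R * r%:R ^+ (r - 1) by rewrite -exprS; congr (_ ^+ _); lia.
by field; rewrite !expf_neq0 // pnatr_eq0; lia.
Qed.

Lemma hbound_gt1 : 1 < B.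
Proof.
rewrite /hbound_over ltr_pdivlMr ?ltr0n ?expn_gt0; last by apply/orP; left; lia.
rewrite mul1r ltr_nat (@leq_ltn_trans (r ^ (r - 1))) ?leq_exp2r ?ltn_exp2l //; lia.
Qed.

(* The scaling gives both recurrences the same constant coefficients, by hbound_scale. *)
Let T n l : R := (hpoly_over R r l n).[B] / (a ^+ n * rho ^+ l).

Let T_recS n l : (l.+1 < r)%N ->
  T n.+1 l.+1 = r%:R / a * T n.+1 l - a^-1 * T n l.+1.
Proof.
move=> hl; rewrite /T hpoly_over_recS hornerD hornerN !exprS /rho.
have := a_gt0; rewrite lt0r => /andP[a_neq0 _].
by field; rewrite a_neq0 r_neq0 !expf_neq0 // mulf_neq0 // invr_eq0.
Qed.

Let T_rec0 n : T n.+1 0 = r%:R / a * T n r.-1 - a^-1 * T n 0.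
Proof.
rewrite /T hpoly_over_rec0; last lia.
rewrite hornerD hornerN (mulrC 'X) hornerMX -hbound_scale.
have -> : r.-1 = (r - 1)%N by lia.
rewrite !expr0 !mulr1 exprS.
have := a_gt0; rewrite lt0r => /andP[a_neq0 _].
have := rho_gt0; rewrite lt0r => /andP[rho_neq0 _].
by field; rewrite a_neq0 !expf_neq0.
Qed.

Lemma hpoly_over_gt0_at_bound l n : (l < r)%N -> 0 < (hpoly_over R r l n).[B].
Proof.
move=> hl; pose t := lexseq r T.
have t_rec N : t (N + r)%N - t (N + r.-1)%N = (t (N + r.-1)%N - t N) / a.
  rewrite /t (@lexseq_rec _ r T _ _ _ (ltnW r_gt1) T_recS T_rec0).
  have := a_gt0; rewrite lt0r => /andP[a_neq0 _].
  have -> : (r%:R : R) = a + 1 by rewrite /a natrB ?subrK //; lia.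
  by rewrite if_same; field.
have t_small k : (k < r)%N -> t k = rho ^- k.
  by move=> hk; rewrite /t /lexseq divn_small ?modn_small // /T hpoly_over_n0 hornerC !mul1r.
have t_init k : (k.+1 < r)%N -> t k < t k.+1.
  move=> hk; rewrite (t_small k (ltnW hk)) (t_small k.+1 hk).
  rewrite exprS invfM ltr_pMl ?invr_gt0 ?exprn_gt0 //.
  by rewrite invf_gt1 // ltr_pdivrMr ?ltr0n 1?ltnW // mul1r ltr_nat; lia.
have t_incr := increasing_of_increment_rec r_gt1 a_gt0 t_rec t_init.
have t_pos : 0 < t (n * r + l)%N.
  rewrite (@lt_le_trans _ _ (t 0%N)) //; first by rewrite t_small ?expr0 ?invr1 //; lia.
  case: (n * r + l)%N => // N; apply: ltW; exact: (homo_ltn lt_trans t_incr).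
move: t_pos; rewrite /t lexseqE // /T.
by rewrite pmulr_lgt0 // invr_gt0 mulr_gt0 ?exprn_gt0.
Qed.

End PositiveAtBound.

Definition hpoly_seq (R : comNzRingType) (r : nat) : nat -> {poly R} :=
  lexseq r (fun n l => hpoly_over R r l n).

Section Interlacing.
Variables (R : rcfType) (r : nat).
Hypothesis r_gt1 : (1 < r)%N.

Local Notation P := (hpoly_seq R r).
Local Notation B := (hbound_over R r).
Let r_gt0 : (0 < r)%N. Proof. exact: ltnW. Qed.

Lemma hpoly_seq_rec N :
  P (N + r)%N = (if (r %| N)%N then 'X else 1) * P (N + r.-1)%N - P N.
Proof.
have recS n l : (l.+1 < r)%N -> hpoly_over R r l.+1 n.+1 =
    1 * hpoly_over R r l n.+1 - 1 * hpoly_over R r l.+1 n.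
  by move=> _; rewrite !mul1r hpoly_over_recS.
have rec0 n : hpoly_over R r 0 n.+1 = 'X * hpoly_over R r r.-1 n - 1 * hpoly_over R r 0 n.
  by rewrite mul1r hpoly_over_rec0.
by rewrite /hpoly_seq (lexseq_rec r_gt0 recS rec0) mul1r.
Qed.

Lemma size_hpoly_seq N : size (P N) = (N %/ r)%N.+1.
Proof. exact: size_hpoly_over. Qed.

Lemma hpoly_seq_monic N : P N \is monic.
Proof. exact: hpoly_over_monic. Qed.

Lemma hpoly_seq_gt0_at_bound N : 0 < (P N).[B].
Proof. by apply: hpoly_over_gt0_at_bound => //; rewrite ltn_pmod. Qed.

Lemma hpoly_seq_next N :
  P (N.+1 + r)%N = (if (r %| N.+1)%N then 'X else 1) * P (N + r)%N - P N.+1.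
Proof. by rewrite hpoly_seq_rec addSnnS prednK. Qed.

Lemma divn_addr_self N : ((N + r) %/ r = (N %/ r)%N.+1)%N.
Proof. by rewrite divnDr // divnn r_gt0 addn1. Qed.

(* The roots of P_{N+i}, i <= r, are the x b i with b below its degree: row b holds the
   (b+1)-st largest roots.  Entries of the last row beyond that degree are placeholders that
   only keep the grid sorted. *)
Definition window N (x : nat -> nat -> R) :=
  [/\ grid_sorted r (N %/ r)%N.+1 x, 0 < x (N %/ r)%N 0%N, x 0%N r < B &
      forall i, (i <= r)%N -> P (N + i)%N = \prod_(b < ((N + i) %/ r)%N) ('X - (x b i)%:P)].

Section Window.
Variables (N : nat) (x : nat -> nat -> R).
Hypothesis x_window : window N x.

Lemma window_last : P (N + r)%N = \prod_(b < (N %/ r)%N.+1) ('X - (x b r)%:P).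
Proof. by case: x_window => _ _ _ ->; rewrite ?divn_addr_self. Qed.

Lemma window_next : P N.+1 = \prod_(b < (N.+1 %/ r)%N) ('X - (x b 1%N)%:P).
Proof. by case: x_window => _ _ _; rewrite -addn1 => ->. Qed.

Lemma window_bounds b i : (b <= N %/ r)%N -> (i <= r)%N -> 0 < x b i < B.
Proof.
case: x_window => xs x_pos x_lt_B _ bn ir.
have /andP[lo hi] := grid_bounds xs bn ir.
by rewrite (lt_le_trans x_pos lo) (le_lt_trans hi x_lt_B).
Qed.

Let n := (N %/ r)%N.
Let d := (N.+1 %/ r)%N.

Let d_eq : d = ((r %| N.+1) + n)%N.
Proof. exact: divnS. Qed.

Let lt_d_le_n j : (j < d)%N -> (j <= n)%N.
Proof. by rewrite d_eq; case: (r %| N.+1)%N => /=; lia. Qed.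

Lemma window_sign_hi b : (b <= d)%N ->
  0 < (-1) ^+ b * (P (N.+1 + r)%N).[if b is b'.+1 then x b' 1%N else B].
Proof.
case: b => [|b] bd; first by rewrite expr0 mul1r hpoly_seq_gt0_at_bound.
have [xs _ _ _] := x_window.
have bn := lt_d_le_n bd.
rewrite hpoly_seq_next window_next hornerD hornerN.
rewrite (@root_prod_XsubC_at _ (fun j => x j 1%N) _ b) // subr0.
rewrite hornerM mulrCA window_last (horner_prod_XsubC (fun j => x j r)); apply: mulr_gt0.
  have /andP[xb1_gt0 _] := window_bounds bn (ltnW r_gt1).
  by case: ifP; rewrite ?hornerX ?hornerC.
apply: (prod_sub_sign (f := fun j => x j r)) => [|j|j]; rewrite ?ltnS //.
  rewrite leq_eqVlt => /orP[/eqP->|jb]; first by apply: (grid_ltr_row xs); rewrite ?r_gt1 ?leqnn.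
  by apply: (grid_ltr_rows xs); rewrite ?jb ?leqnn //; lia.
by move=> /andP[bj jn]; apply: (grid_ltr_rows xs); rewrite ?bj //; lia.
Qed.

Lemma window_sign_lo b : (b <= d)%N ->
  0 < (-1) ^+ b.+1 * (P (N.+1 + r)%N).[if (b <= n)%N then x b r else 0].
Proof.
move=> bd; have [xs _ _ _] := x_window.
set lo := if (b <= n)%N then x b r else 0.
have div_of_gt : (n < b)%N -> (r %| N.+1)%N.
  by move: bd; rewrite d_eq; case: (r %| N.+1)%N => //=; lia.
have lo_root : (if (r %| N.+1)%N then 'X else 1).[lo] * (P (N + r)%N).[lo] = 0.
  rewrite /lo; case: (ltnP n b) => [nb|bn]; first by rewrite div_of_gt // hornerX mul0r.
  by rewrite window_last (@root_prod_XsubC_at _ (fun j => x j r) _ b) ?mulr0.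
rewrite hpoly_seq_next hornerD hornerN hornerM lo_root add0r exprS mulN1r mulrNN.
rewrite window_next (horner_prod_XsubC (fun j => x j 1%N)).
apply: (prod_sub_sign (f := fun j => x j 1%N)) => [//|j jb|j /andP[bj jd]]; rewrite /lo.
  case: (ltnP n b) => [nb|bn]; last by apply: (grid_ltr_rows xs); rewrite ?jb //; lia.
  have jn : (j <= n)%N by apply: lt_d_le_n; apply: leq_trans bd.
  by have /andP[] := window_bounds jn (ltnW r_gt1).
have bn : (b <= n)%N by apply: lt_d_le_n; apply: leq_ltn_trans jd.
rewrite bn; move: bj; rewrite leq_eqVlt => /orP[/eqP<-|bj].
  by apply: (grid_ltr_row xs); rewrite ?r_gt1 ?leqnn.
by apply: (grid_ltr_rows xs); rewrite ?bj //; lia.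
Qed.

Lemma window_next_roots : exists y : nat -> R,
  (forall b, (b < d.+1)%N ->
     (if (b <= n)%N then x b r else 0) < y b < (if b is b'.+1 then x b' 1%N else B)) /\
  P (N.+1 + r)%N = \prod_(b < d.+1) ('X - (y b)%:P).
Proof.
have [xs _ x_lt_B _] := x_window.
apply: (monic_roots_in_intervals (lo := fun b => if (b <= n)%N then x b r else 0)
  (hi := fun b => if b is b'.+1 then x b' 1%N else B)).
- by rewrite size_hpoly_seq divn_addr_self.
- exact: hpoly_seq_monic.
- case=> [|b] bd /=; first by rewrite x_lt_B.
  case: (ltnP n b.+1) => [nb|bn]; last by apply: (grid_ltr_rows xs); rewrite ?ltnSn //; lia.
  by have /andP[] := window_bounds (lt_d_le_n bd) (ltnW r_gt1).
- move=> j [|k] // /andP[jk]; rewrite ltnS => /lt_d_le_n kn.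
  rewrite (_ : (j <= n)%N); last lia.
  move: jk; rewrite ltnS leq_eqVlt => /orP[/eqP->|jk].
    by apply: (grid_ler_row xs); rewrite ?ltnS ?kn ?r_gt0 ?leqnn.
  by apply/ltW/(grid_ltr_rows xs); rewrite ?jk ?ltnS ?kn.
- move=> b bd; rewrite ltnS in bd.
  have := mulr_gt0 (window_sign_lo bd) (window_sign_hi bd).
  have sign : (-1) ^+ b.+1 * (-1) ^+ b = -1 :> R.
    by rewrite exprS -mulrA -expr2 sqrr_sign mulr1.
  by rewrite mulrACA sign mulN1r oppr_gt0.
Qed.

Lemma window_succ : exists x', window N.+1 x'.
Proof.
have [xs _ _ x_prod] := x_window; have [y [y_in y_prod]] := window_next_roots.
have y_gt0 b : (b < d.+1)%N -> 0 < y b.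
  move=> /y_in /andP[lo_y _]; apply: le_lt_trans lo_y; case: ifP => // bn.
  by have /andP[/ltW] := window_bounds bn (leqnn r).
pose ghost b i : R := y b * i.+1%:R / r.+1%:R.
have ghost_lt b i j : (b < d.+1)%N -> (i < j)%N -> ghost b i < ghost b j.
  move=> bd ij; rewrite /ghost ltr_pM2r ?invr_gt0 ?ltr0n // ltr_pM2l ?y_gt0 //.
  by rewrite ltr_nat.
pose x' b i := if (i < r)%N then (if (b <= n)%N then x b i.+1 else ghost b i) else y b.
have ghost_r b : (b < d.+1)%N -> ghost b r.-1 < y b.
  move=> bd; rewrite /ghost prednK // -mulrA gtr_pMr ?y_gt0 //.
  by rewrite ltr_pdivrMr ?ltr0n // mul1r ltr_nat.
exists x'; split.
- split=> [b i bd ir|b bd]; rewrite /x' ?ltnn ?r_gt0 ?ir.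
    case: (ltnP i.+1 r) => [ir'|ri]; first by case: ifP => bn; [apply: xs.1 | exact: ghost_lt].
    have -> : i = r.-1 by lia.
    case: ifP => bn; last exact: ghost_r.
    by have /andP[] := y_in b bd; rewrite bn prednK.
  by have /andP[_] := y_in b.+1 bd; rewrite lt_d_le_n.
- rewrite /x' r_gt0; case: ifP => dn; last by rewrite /ghost !mulr_gt0 ?y_gt0 ?invr_gt0 ?ltr0n.
  by have /andP[] := window_bounds dn (ltnW r_gt1).
- by rewrite /x' ltnn; have /andP[] := y_in 0%N isT.
move=> i ir; case: (ltnP i r) => [ir'|ri].
  rewrite addSnnS x_prod //; apply: eq_bigr => -[b /= hb] _.
  have bn : (b <= n)%N.
    by rewrite -ltnS -divn_addr_self; apply: leq_trans hb _; apply: leq_div2r; rewrite leq_add2l.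
  by rewrite /x' ir' bn.
have -> : i = r by lia.
by rewrite y_prod divn_addr_self; apply: eq_bigr => b _; rewrite /x' ltnn.
Qed.

End Window.

Lemma window0 : window 0 (fun _ i => i.+1%:R / r.+1%:R).
Proof.
rewrite /window div0n; split.
- split=> [b i _ ir|//]; rewrite ltr_pM2r ?invr_gt0 ?ltr0n //.
  by rewrite ltr_nat.
- by rewrite divr_gt0 ?ltr0n.
- by rewrite divff ?pnatr_eq0 // hbound_gt1.
move=> i ir; rewrite add0n /hpoly_seq /lexseq; case: (ltnP i r) => [ir'|ri].
  by rewrite divn_small // modn_small // hpoly_over_n0 big_ord0.
have -> : i = r by lia.
rewrite divnn modnn r_gt0 big_ord1 hpoly_over_rec0 // !hpoly_over_n0 mulr1.
by rewrite divff ?pnatr_eq0.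
Qed.

Lemma hpoly_over_roots_in_bound l n : (l < r)%N -> exists y : nat -> R,
  hpoly_over R r l n = \prod_(b < n) ('X - (y b)%:P) /\
  (forall b, (b < n)%N -> 0 < y b < B).
Proof.
move=> lr; have [x xw] : exists x, window (n * r + l)%N x.
  elim: (n * r + l)%N => [|N [x xw]]; [eexists; exact: window0 | exact: window_succ xw].
have nl : ((n * r + l) %/ r)%N = n by rewrite divnMDl // divn_small ?addn0.
exists (fun b => x b 0%N); split.
  by have [_ _ _ /(_ 0%N isT)] := xw; rewrite addn0 nl /hpoly_seq lexseqE // => ->.
by move=> b bn; apply: (window_bounds xw); rewrite ?nl 1?ltnW.
Qed.

End Interlacing.

From Stdlib Require Import Reals Lra.

Section ExpBound.
Local Open Scope R_scope.

Lemma pow_one_plus_inv_lt_exp1 (m : nat) : (1 <= m)%coq_nat -> (1 + / INR m) ^ m < exp 1.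
Proof.
move=> hm; have m_gt0 : 0 < INR m by apply: lt_0_INR; lia.
have inv_gt0 : 0 < / INR m by apply: Rinv_0_lt_compat.
rewrite -Rpower_pow; last lra.
apply: exp_increasing.
have ln_lt : ln (1 + / INR m) < / INR m.
  rewrite -{2}(ln_exp (/ INR m)); apply: ln_increasing; first lra.
  by apply: exp_ineq1; lra.
apply: (Rlt_le_trans _ (INR m * / INR m)); first exact: Rmult_lt_compat_l.
by rewrite Rinv_r; lra.
Qed.

Lemma pow_div_pow_pred_lt (r : nat) : (2 <= r)%coq_nat ->
  INR r ^ r / INR (r - 1) ^ (r - 1) < exp 1 * INR r.
Proof.
case: r => [|m] hr; first lia.
have -> : (m.+1 - 1 = m)%nat by lia.
have m_gt0 : 0 < INR m by apply: lt_0_INR; lia.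
have -> : INR m.+1 ^ m.+1 / INR m ^ m = (1 + / INR m) ^ m * INR m.+1.
  rewrite (_ : 1 + / INR m = INR m.+1 / INR m); last by rewrite S_INR; field; lra.
  by rewrite /Rdiv Rpow_mult_distr pow_inv /=; field; apply: pow_nonzero; lra.
apply: Rmult_lt_compat_r; first by apply: lt_0_INR; lia.
by apply: pow_one_plus_inv_lt_exp1; lia.
Qed.

End ExpBound.

Theorem lemma3 (r l n : nat) (hr : leq 2 r) (hl : leq l.+1 r) (hn : leq 1 n) :
  (forall z : algC, root (hpoly r l n) z ->
     [&& z \is Num.real, 0 < z & z < hbound r])
  /\ Rlt (Rdiv (pow (INR r) r) (pow (INR (subn r 1)) (subn r 1)))
         (Rmult (exp (IZR 1)) (INR r)).
Proof.
split; last by apply: pow_div_pow_pred_lt; lia.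
have [y [hy y_bounds]] := hpoly_over_roots_in_bound algR hr n hl.
have -> : hpoly r l n = map_poly algRval (hpoly_over algR r l n) by rewrite map_hpoly_over.
have -> : hbound r = algRval (hbound_over algR r) by rewrite fmorph_div !rmorph_nat.
move=> z; rewrite hy rmorph_prod /root horner_prod => /prodf_eq0[b _].
rewrite /= map_polyXsubC hornerXsubC subr_eq0 => /eqP->.
by rewrite algRvalP; exact: y_bounds.
Qed.
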